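(* Let $G=(V,E)$ be a finite simple graph on $n$ vertices with no isolated vertex. Let $G'$ be any graph with vertex set $V$ obtained as follows: for each vertex $v\in V$, if $\deg_G(v)\ge 2$, choose two distinct neighbors $u,w$ of $v$ in $G$ (arbitrarily) and put the edge $uw$ into $G'$; if $\deg_G(v)=1$, put a loop on the unique neighbor of $v$ into $G'$ (an edge already present is not duplicated). Then $$\gamma_t(G)\le n-\alpha(G')=\beta(G').$$
   Context: A set $S\subseteq V$ is a total dominating set of $G$ if every vertex $v\in V$ has a neighbor in $S$; $\gamma_t(G)$ is the minimum size of a total dominating set of $G$. For a graph $H$ possibly with loops, an independent set is a set of vertices containing no two endpoints of an edge and no vertex carrying a loop, and $\alpha(H)$ is the maximum size of an independent set; a vertex cover is a set of vertices meeting every edge (so it contains every vertex carrying a loop), and $\beta(H)$ is the minimum size of a vertex cover. *)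

(* A finite simple graph on a finType V is a symmetric,
   irreflexive boolean relation e; graphs possibly with loops are arbitrary
   symmetric relations (a loop at x is  h x x). *)
From mathcomp Require Import all_boot.
Set Implicit Arguments. Unset Strict Implicit. Unset Printing Implicit Defensive.

Section Defs.
Variable V : finType.

Definition simple_graph (e : rel V) : Prop :=
  irreflexive e /\ symmetric e.

Definition nbhd (e : rel V) (v : V) : {set V} := [set u | e v u].
Definition deg (e : rel V) (v : V) : nat := #|nbhd e v|.

Definition total_dominating (e : rel V) (S : {set V}) : bool :=
  [forall v, exists u, (u \in S) && e v u].
Definition gamma_t (e : rel V) : nat :=
  \big[minn/#|V|]_(S : {set V} | total_dominating e S) #|S|.

Definition independent (h : rel V) (S : {set V}) : bool :=
  [forall x in S, forall y in S, ~~ h x y].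
Definition alpha (h : rel V) : nat :=
  \max_(S : {set V} | independent h S) #|S|.
Definition vertex_cover (h : rel V) (S : {set V}) : bool :=
  [forall x, forall y, h x y ==> (x \in S) || (y \in S)].
Definition beta (h : rel V) : nat :=
  \big[minn/#|V|]_(S : {set V} | vertex_cover h S) #|S|.

(* The graph G' built from choices p1 v, p2 v (for each vertex v):
   the edge {p1 v, p2 v}, which is a loop when p1 v = p2 v. *)
Definition Gprime (p1 p2 : V -> V) : rel V :=
  fun x y => [exists v, ((p1 v == x) && (p2 v == y)) || ((p1 v == y) && (p2 v == x))].

Definition valid_choice (e : rel V) (p1 p2 : V -> V) : Prop :=
  forall v,
    (2 <= deg e v -> [/\ e v (p1 v), e v (p2 v) & p1 v != p2 v]) /\
    (deg e v = 1 -> e v (p1 v) /\ p1 v = p2 v).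
End Defs.

(* For each v, G' has an edge (or loop) joining two neighbours of v, so a
   vertex cover of G' meets the neighbourhood of every vertex, i.e. it is a
   total dominating set of G.  The complement of a maximum independent set of
   G' is a minimum vertex cover, which gives both the bound and the identity
   n - alpha(G') = beta(G'). *)
From HB Require Import structures.
From mathcomp Require Import all_boot.
Set Implicit Arguments. Unset Strict Implicit.

HB.instance Definition _ := SemiGroup.isComLaw.Build nat minn minnA minnC.

Section MinCard.
Variables (V : finType) (P : pred {set V}).

Lemma bigmin_card_le (S : {set V}) :
  P S -> \big[minn/#|V|]_(T : {set V} | P T) #|T| <= #|S|.
Proof. by move=> PS; rewrite (bigD1 S) //= geq_minl. Qed.

Lemma bigmin_card_ge k :
  k <= #|V| -> (forall S, P S -> k <= #|S|) ->
  k <= \big[minn/#|V|]_(S : {set V} | P S) #|S|.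
Proof.
move=> kV kP; apply: (big_ind (fun x => k <= x)) => // x y kx ky.
by rewrite leq_min kx ky.
Qed.

End MinCard.

Section CoverIndependent.
Variables (V : finType) (h : rel V).

Lemma vertex_coverC (S : {set V}) : vertex_cover h (~: S) = independent h S.
Proof.
apply/forallP/forall_inP => [cover x xS | indep x].
  apply/forall_inP => y yS; apply/negP => hxy.
  by move/forallP/(_ y)/implyP/(_ hxy): (cover x); rewrite !inE xS yS.
apply/forallP => y; apply/implyP => hxy; rewrite !inE -negb_and.
apply: contraL hxy => /andP[xS yS].
exact: (forall_inP (indep x xS) y yS).
Qed.

Lemma exists_vertex_cover_card :
  exists2 C : {set V}, vertex_cover h C & #|C| = #|V| - alpha h.
Proof.
have indep0 : independent h set0 by apply/forall_inP => x; rewrite inE.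
have [S indepS ->] : {S | independent h S & alpha h = #|S|}.
  by apply: eq_bigmax_cond; apply/card_gt0P; exists set0.
by exists (~: S); rewrite ?vertex_coverC // cardsCs setCK.
Qed.

Lemma beta_alpha : beta h = #|V| - alpha h.
Proof.
apply/eqP; rewrite eqn_leq; apply/andP; split.
  by have [C coverC <-] := exists_vertex_cover_card; apply: bigmin_card_le.
apply: bigmin_card_ge => [|C]; first exact: leq_subr.
rewrite -{1}[C]setCK vertex_coverC.
move=> /(@leq_bigmax_cond _ _ (fun S : {set V} => #|S|)) indep_le_alpha.
by rewrite leq_subLR -(cardsC C) addnC leq_add2r.
Qed.

End CoverIndependent.

Section ValidChoice.
Variables (V : finType) (e : rel V) (p1 p2 : V -> V).
Hypotheses (nonisolated : forall v, 0 < deg e v)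
           (valid : valid_choice e p1 p2).

Lemma valid_choice_nbhd v : e v (p1 v) && e v (p2 v).
Proof.
have [many one] := valid v.
move: (nonisolated v); rewrite leq_eqVlt.
case/orP=> [/eqP/esym/one[ep1 <-] | /many[-> -> _] //].
by rewrite ep1.
Qed.

Lemma Gprime_choice v : Gprime p1 p2 (p1 v) (p2 v).
Proof. by apply/existsP; exists v; rewrite !eqxx. Qed.

Lemma vertex_cover_Gprime_total_dominating (C : {set V}) :
  vertex_cover (Gprime p1 p2) C -> total_dominating e C.
Proof.
move=> /forallP cover; apply/forallP => v.
have /andP[ep1 ep2] := valid_choice_nbhd v.
move/forallP/(_ (p2 v))/implyP/(_ (Gprime_choice v))/orP: (cover (p1 v)).
by case=> inC; apply/existsP; [exists (p1 v) | exists (p2 v)]; rewrite inC.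
Qed.

End ValidChoice.

Theorem lemma2p1 (V : finType) (e : rel V) (p1 p2 : V -> V) :
  simple_graph e ->
  (forall v : V, 0 < deg e v) ->
  valid_choice e p1 p2 ->
  gamma_t e <= #|V| - alpha (Gprime p1 p2) /\
  #|V| - alpha (Gprime p1 p2) = beta (Gprime p1 p2).
Proof.
move=> _ nonisolated valid; rewrite beta_alpha; split=> //.
have [C coverC <-] := exists_vertex_cover_card (Gprime p1 p2).
apply: bigmin_card_le.
exact: vertex_cover_Gprime_total_dominating coverC.
Qed.
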